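(* For $n\geq 2$ and $0\le q\le n-1$, the reduced simplicial homology satisfies $\widetilde H_q(X(n),\mathbb Z)\cong\mathbb Z^{\beta(n,q)}$, where $\beta(n,q)$ is the number of partitions of $[n]$ into $q+1$ blocks such that every block is a proper subset of $[n]$ of size at least $2$. In particular $\widetilde H_q(X(n),\mathbb Z)=0$ if $q=0$ or $q>\lfloor n/2\rfloor-1$, and for $q>0$, $$\beta(n,q)=\sum_{i=0}^{q+1}(-1)^i\binom{n}{i}\left\{{n-i\atop q-i+1}\right\},$$ where $\left\{{m\atop k}\right\}$ denotes the Stirling number of the second kind (number of partitions of an $m$-set into $k$ non-empty blocks).
   Context: For $n\ge 2$, $X(n)$ is the simplicial complex whose vertices are the proper non-empty subsets $\varnothing\neq x\subsetneq[n]$, $[n]=\{1,\dots,n\}$, and whose $q$-faces are the sets $\{x_0,\dots,x_q\}$ of $q+1$ pairwise disjoint proper non-empty subsets of $[n]$. (It is the matching complex of the complete hypergraph on $[n]$ with its isolated vertex $[n]$ removed.) Reduced homology uses the augmentation $C_0\to C_{-1}=\mathbb Z$. *)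

From mathcomp Require Import all_boot all_order all_algebra.
Set Implicit Arguments. Unset Strict Implicit. Unset Printing Implicit Defensive.
Import GRing.Theory.
Local Open Scope ring_scope.

(* A face with k vertices has
   dimension k-1; the empty face (k = 0) gives C_{-1} = Z, i.e. the
   augmentation, so the homology below is REDUCED homology. *)
Definition is_vertex (n : nat) (x : {set 'I_n}) : bool :=
  (x != set0) && (x != [set: 'I_n]).

Definition is_face (n : nat) (s : {set {set 'I_n}}) : bool :=
  [forall x in s, is_vertex x] &&
  [forall x in s, forall y in s, (x != y) ==> [disjoint x & y]].

Definition chain (n : nat) := {ffun {set {set 'I_n}} -> int}.

(* c is a chain of k-vertex faces (i.e. an element of C_{k-1}). *)
Definition is_chain (n k : nat) (c : chain n) : Prop :=
  forall s, c s != 0 -> is_face s /\ #|s| = k.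

(* Orientation: vertices of a face are ordered by enum_rank on {set 'I_n};
   pos s v = index of v in the ordered face s. *)
Definition pos (n : nat) (s : {set {set 'I_n}}) (v : {set 'I_n}) : nat :=
  #|[set w in s | (enum_rank w < enum_rank v)%N]|.

(* Boundary map C_{k-1} -> C_{k-2}:
   d [v_0,...,v_{k-1}] = sum_i (-1)^i [v_0,..,^v_i,..,v_{k-1}]. *)
Definition bd (n k : nat) (c : chain n) : chain n :=
  [ffun t => \sum_(s | is_face s && (#|s| == k)%N)
               \sum_(v in s) (if t == s :\ v then (-1) ^+ pos s v * c s else 0)].

Definition is_cycle (n q : nat) (c : chain n) : Prop :=
  @is_chain n q.+1 c /\ @bd n q.+1 c = 0.

Definition is_boundary (n q : nat) (c : chain n) : Prop :=
  exists d, @is_chain n q.+2 d /\ c = @bd n q.+2 d.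

(* H~_q(X(n), Z) = Z_q / B_q is isomorphic to Z^b : there is a group
   homomorphism from the cycle group Z_q onto Z^b whose kernel is B_q
   (first isomorphism theorem). *)
Definition reduced_homology_iso_Zpow (n q b : nat) : Prop :=
  exists f : chain n -> {ffun 'I_b -> int},
    (forall c1 c2, @is_cycle n q c1 -> @is_cycle n q c2 ->
        f (c1 + c2) = f c1 + f c2) /\
    (forall y, exists c, @is_cycle n q c /\ f c = y) /\
    (forall c, @is_cycle n q c -> (f c = 0 <-> @is_boundary n q c)).

Definition beta (n q : nat) : nat :=
  #|[set P : {set {set 'I_n}} | [&& partition P [set: 'I_n], #|P| == q.+1 &
        [forall B in P, (2 <= #|B|)%N && (B != [set: 'I_n])]]]|.

(* Stirling numbers of the second kind: partitions of an m-set into k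
   non-empty blocks (mathcomp's partition excludes the empty block). *)
Definition stirling2 (m k : nat) : nat :=
  #|[set P : {set {set 'I_m}} | partition P [set: 'I_m] && (#|P| == k)]|.

(* Call a face critical if it is a partition of [n] into blocks of size at
   least 2; beta n q counts the critical faces of dimension q.  A partition
   of [n] is a maximal face, so boundaries vanish on critical faces, and
   evaluating a cycle on the critical q-faces gives a morphism Z_q -> Z^beta
   killing B_q.  Conversely, let z be a cycle vanishing on critical faces,
   and let P be the set of large (size >= 2) blocks of a face s with
   z s <> 0, with #|P| maximal.  P cannot cover [n], since s would then be
   critical; so pick j outside cover P and cone z off over the vertex {j},
   on the faces whose set of large blocks is exactly P.  Because z is a
   cycle, the boundary of this cone agrees with z on all faces with large
   blocks P, and it is supported on faces whose large blocks lie in P.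
   Subtracting it lowers the number of such faces, so by induction z is a
   boundary; applied to the boundary of a critical face, the same argument
   provides a cycle dual to that face, so the morphism is onto.  The formula
   for beta is inclusion-exclusion over the set of singleton blocks of a
   partition. *)

From HB Require Import structures.
From mathcomp Require Import all_boot all_order all_algebra.
From mathcomp Require Import zify.
Import GRing.Theory Num.Theory.
Local Open Scope ring_scope.
Set Implicit Arguments. Unset Strict Implicit. Unset Printing Implicit Defensive.

Section Boundary.
Variable n : nat.
Local Notation V := {set 'I_n}.
Local Notation F := {set V}.
Implicit Types (s t a P : F) (u v w x y : V) (c d z : chain n).

Definition rk v : nat := enum_rank v.
Definition sgn s v : int := (-1) ^+ pos s v.

Lemma rk_inj : injective rk.
Proof. by move=> x y /val_inj /enum_rank_inj. Qed.

Lemma pos_setU1 s v w : v \notin s -> v != w ->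
  pos (v |: s) w = (pos s w + (rk v < rk w))%N.
Proof.
move=> vs vw; rewrite /pos.
have -> : [set x in v |: s | (enum_rank x < enum_rank w)%N] =
   (if (rk v < rk w)%N then v |: [set x in s | (enum_rank x < enum_rank w)%N]
    else [set x in s | (enum_rank x < enum_rank w)%N]).
  apply/setP => x; rewrite !inE; case: (eqVneq x v) => [->|xv] /=.
    by case: ifP => h; rewrite ?inE ?eqxx //= (negbTE vs) h.
  by case: ifP => h; rewrite ?inE ?(negbTE xv).
case: ifP => h; last by rewrite addn0.
by rewrite cardsU1 inE (negbTE vs) addnC.
Qed.

Lemma pos_setU1_id s v : pos (v |: s) v = pos s v.
Proof.
rewrite /pos; apply: eq_card => x; rewrite !inE.
by case: (eqVneq x v) => [->|] //=; rewrite ltnn andbF.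
Qed.

Lemma sgn_setU1 s v w : v \notin s -> v != w ->
  sgn (v |: s) w = sgn s w * (-1) ^+ (rk v < rk w).
Proof. by move=> vs vw; rewrite /sgn pos_setU1 // exprD. Qed.

Lemma sgn_setU1_id s v : sgn (v |: s) v = sgn s v.
Proof. by rewrite /sgn pos_setU1_id. Qed.

Lemma sgn_sqr s v : sgn s v * sgn s v = 1.
Proof. by rewrite /sgn -exprD -signr_odd addnn odd_double. Qed.

(* Inserting v then w or w then v differs by one transposition. *)
Lemma sgn_exchange t v w : v \notin t -> w \notin t -> v != w ->
  sgn (v |: t) v * sgn (w |: (v |: t)) w =
  - (sgn (w |: t) w * sgn (v |: (w |: t)) v).
Proof.
move=> vt wt vw; have wv : w != v by rewrite eq_sym.
rewrite !sgn_setU1_id (sgn_setU1 vt vw) (sgn_setU1 wt wv).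
case: (ltngtP (rk v) (rk w)) => [lt|gt|/rk_inj eq]; last by rewrite eq eqxx in vw.
- by rewrite expr0 expr1 mulr1 mulrN1 mulrN mulrC.
- by rewrite expr0 expr1 mulr1 mulrN1 mulrN opprK mulrC.
Qed.

Lemma sgn_setU1_pair t v w : v \notin t -> w \notin t -> v != w ->
  sgn (w |: (v |: t)) w * sgn (w |: (v |: t)) v = - (sgn (v |: t) v * sgn (w |: t) w).
Proof.
move=> vt wt vw; have wv : w != v by rewrite eq_sym.
have wvt : w \notin v |: t by rewrite in_setU1 negb_or wv.
rewrite (sgn_setU1 wvt wv) !sgn_setU1_id (sgn_setU1 vt vw).
case: (ltngtP (rk v) (rk w)) => [lt|gt|/rk_inj eq]; last by rewrite eq eqxx in vw.
all: by rewrite ?expr0 ?expr1 ?mulr1 ?mulrN1 ?mulrN ?mulNr (mulrC (sgn t w)).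
Qed.

Lemma faceP s : reflect ((forall x, x \in s -> is_vertex x) /\
  (forall x y, x \in s -> y \in s -> x != y -> [disjoint x & y])) (is_face s).
Proof.
apply: (iffP andP) => [[/forall_inP h1 /forall_inP h2]|[h1 h2]]; split.
- exact: h1.
- by move=> x y xs ys xy; move/forall_inP: (h2 x xs) => /(_ y ys) /implyP; apply.
- by apply/forall_inP.
- by apply/forall_inP => x xs; apply/forall_inP => y ys; apply/implyP; apply: h2.
Qed.

Lemma face_subset s t : is_face s -> t \subset s -> is_face t.
Proof.
move=> /faceP[h1 h2] /subsetP ts; apply/faceP; split.
  by move=> x /ts; apply: h1.
by move=> x y /ts xs /ts ys; apply: h2.
Qed.

Lemma face_setU1 v t : is_face (v |: t) =
  [&& is_vertex v, is_face t & [forall x in t, (x != v) ==> [disjoint v & x]]].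
Proof.
apply/idP/idP => [fa|/and3P[vv ft /forall_inP dv]].
  rewrite (face_subset fa (subsetUr _ _)); move/faceP: fa => [h1 h2].
  rewrite (h1 v (setU11 _ _)) /=; apply/forall_inP => x xt; apply/implyP => xv.
  by apply: h2; rewrite ?setU11 ?inE ?xt ?orbT // eq_sym.
move/faceP: ft => [h1 h2]; apply/faceP; split.
  by move=> x; rewrite in_setU1 => /orP[/eqP->|/h1].
have dv' x : x \in t -> x != v -> [disjoint v & x] by move=> xt; move/implyP: (dv x xt).
move=> x y; rewrite !in_setU1 => /orP[/eqP->|xt] /orP[/eqP->|yt]; rewrite ?eqxx // => xy.
- by apply: dv'; rewrite // eq_sym.
- by rewrite disjoint_sym; apply: dv'; rewrite // eq_sym.
- exact: h2.
Qed.

Definition coface k t v := [&& v \notin t, is_face (v |: t) & #|v |: t| == k].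

Lemma coface_face k t v : coface k.+1 t v -> is_face t /\ #|t| = k.
Proof.
case/and3P => vt fa /eqP; rewrite cardsU1 vt add1n => -[].
by split=> //; apply: face_subset fa (subsetUr _ _).
Qed.

Lemma bdE k c t : bd k c t = \sum_(v | coface k t v) sgn (v |: t) v * c (v |: t).
Proof.
rewrite ffunE.
rewrite (eq_bigr (fun s => \sum_v (if (v \in s) && (t == s :\ v) then
         (-1) ^+ pos s v * c s else 0))); last first.
  by move=> s _; rewrite [RHS](bigID (fun v => v \in s)) /= [X in _ = _ + X]big1
       ?addr0 => [|v /negbTE ->]; [apply: eq_bigr => v ->|].
rewrite exchange_big /= [RHS]big_mkcond /=; apply: eq_bigr => v _.
case: (boolP (coface k t v)) => [/and3P[vt fa sz]|nc].
  rewrite (bigD1 (v |: t)) /=; last by rewrite fa sz.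
  rewrite setU11 setU1K // eqxx /= big1 ?addr0 // => s /andP[/andP[_ _] ne].
  case: ifP => // /andP[vs /eqP ts]; move: ne; rewrite ts setD1K ?eqxx //.
rewrite big1 // => s /andP[fs szs]; case: ifP => // /andP[vs /eqP ts].
by move: nc; rewrite /coface ts setD1K // !inE eqxx fs szs.
Qed.

Lemma bd_is_zmod_morphism k : zmod_morphism (@bd n k).
Proof.
move=> c1 c2; apply/ffunP => t; rewrite [RHS]ffunE [X in _ = _ + X]ffunE !bdE -sumrB.
by apply: eq_bigr => v _; rewrite !ffunE mulrBr.
Qed.

HB.instance Definition _ k := GRing.isZmodMorphism.Build _ _ (@bd n k) (bd_is_zmod_morphism k).

Lemma bd_neq0 k c t : bd k c t != 0 -> exists2 v, coface k t v & c (v |: t) != 0.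
Proof.
rewrite bdE => /eqP h; apply/exists_inP; apply/negP => /exists_inP hn; apply: h.
rewrite big1 // => v bv; case: (eqVneq (c (v |: t)) 0) => [->|cv]; first by rewrite mulr0.
by case: hn; exists v.
Qed.

Lemma is_chain_bd k c : is_chain k (bd k.+1 c).
Proof. by move=> t /bd_neq0[v /coface_face]. Qed.

Lemma bd_partition k c t : partition t [set: 'I_n] -> bd k c t = 0.
Proof.
move=> /and3P[/eqP cov _ _]; apply/eqP/negP => /negP /bd_neq0[v /and3P[vt fa _] _].
move: fa; rewrite face_setU1 => /and3P[/andP[/set0Pn[i iv] _] _ /forall_inP dv].
have /bigcupP[x xt ix] : i \in cover t by rewrite cov inE.
have := dv x xt; rewrite (_ : x != v) /=; last by apply: contraNneq vt => <-.
by move/pred0P/(_ i); rewrite /= iv ix.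
Qed.

Lemma bd_bd k c : bd k (bd k.+1 c) = 0.
Proof.
apply/ffunP => t; rewrite [RHS]ffunE bdE.
pose G v w := if [&& v \notin t, w \notin t, v != w, is_face (w |: (v |: t))
    & #|w |: (v |: t)| == k.+1]
  then sgn (v |: t) v * sgn (w |: (v |: t)) w * c (w |: (v |: t)) else 0.
transitivity (\sum_v \sum_w G v w).
  rewrite [RHS](bigID (coface k t)) /= [X in _ = _ + X]big1 ?addr0; last first.
    move=> v nb; rewrite big1 // => w _; rewrite /G; case: ifP => //.
    case/and5P => vt wt vw fw /eqP sw; case/negP: nb; rewrite /coface vt.
    rewrite (face_subset fw (subsetUr _ _)) /=.
    have wvt : w \notin v |: t by rewrite in_setU1 negb_or eq_sym vw wt.
    by move: sw; rewrite cardsU1 wvt add1n => -[->].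
  apply: eq_bigr => v bv; rewrite bdE mulr_sumr.
  rewrite [RHS](bigID (coface k.+1 (v |: t))) /= [X in _ = _ + X]big1 ?addr0.
    apply: eq_bigr => w bw; rewrite /G.
    case/and3P: bv => vt _ _; case/and3P: bw => wvt fw sw; move: wvt.
    by rewrite in_setU1 negb_or => /andP[wv wt]; rewrite vt wt eq_sym wv fw sw /= mulrA.
  move=> w nb; rewrite /G; case: ifP => //; case/and5P => vt wt vw fw sw.
  by case/negP: nb; rewrite /coface in_setU1 negb_or eq_sym vw wt fw sw.
have G_antisym v w : G w v = - G v w.
  rewrite /G setUCA; case: (boolP [&& v \notin t, w \notin t, v != w, _ & _]).
    case/and5P => vt wt vw fw sw; rewrite wt vt eq_sym vw fw sw /=.
    by rewrite (sgn_exchange vt wt vw) [v |: (w |: t)]setUCA mulNr opprK.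
  move=> nc; case: ifP; rewrite ?oppr0 // => /and5P[wt vt wv fw sw].
  by case/negP: nc; rewrite vt wt eq_sym wv fw sw.
set S := \sum_v _; have : S = - S.
  rewrite {1}/S exchange_big /= -sumrN; apply: eq_bigr => v _.
  by rewrite -sumrN; apply: eq_bigr => w _; rewrite G_antisym.
by move/eqP; rewrite -addr_eq0 -mulr2n mulrn_eq0 => /eqP.
Qed.

Lemma is_chainD k c1 c2 : is_chain k c1 -> is_chain k c2 -> is_chain k (c1 + c2).
Proof.
move=> h1 h2 t; rewrite ffunE; case: (eqVneq (c1 t) 0) => [->|/h1 //].
by rewrite add0r => /h2.
Qed.

Lemma is_chainN k c : is_chain k c -> is_chain k (- c).
Proof. by move=> h t; rewrite ffunE oppr_eq0 => /h. Qed.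

Lemma chainBE c1 c2 t : (c1 - c2) t = c1 t - c2 t.
Proof. by rewrite !ffunE. Qed.

Lemma is_cycle0 q : is_cycle q (0 : chain n).
Proof. by split; [move=> t; rewrite ffunE eqxx | rewrite raddf0]. Qed.

Lemma is_cycleD q c1 c2 : is_cycle q c1 -> is_cycle q c2 -> is_cycle q (c1 + c2).
Proof.
by move=> [h1 b1] [h2 b2]; split; [apply: is_chainD | rewrite raddfD /= b1 b2 addr0].
Qed.

Lemma is_cycleMz q c r : is_cycle q c -> is_cycle q (c *~ r).
Proof.
move=> [h b]; split; last by rewrite raddfMz /= b mul0rz.
by move=> t; rewrite ffunMzE => nz; apply: h; apply: contraNneq nz => ->; rewrite mul0rz.
Qed.

Definition critical s := partition s [set: 'I_n] &&
  [forall B in s, (2 <= #|B|)%N && (B != [set: 'I_n])].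

Definition off_critical c := forall t, critical t -> c t = 0.

Lemma critical_face s : critical s -> is_face s.
Proof.
case/andP => /and3P[_ tr s0] /forall_inP h; apply/faceP; split.
  move=> x xs; rewrite /is_vertex; case/andP: (h x xs) => _ ->; rewrite andbT.
  by apply: contraNneq s0 => <-.
by move=> x y xs ys; apply: (trivIsetP tr).
Qed.

Lemma critical_card_neq1 s : critical s -> #|s| != 1%N.
Proof.
case/andP => sp /forall_inP h; apply/negP => /cards1P[B sB].
have Bs : B \in s by rewrite sB set11.
have /andP[_ /negP] := h B Bs; apply.
by rewrite -(cover_partition sp) sB cover1.
Qed.

Definition critical_faces q := [set s | critical s && (#|s| == q.+1)].

Lemma card_critical_faces q : #|critical_faces q| = beta n q.
Proof.
apply: eq_card => s; rewrite !inE /critical -andbA; congr (_ && _); exact: andbC.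
Qed.

Lemma beta_eq0 q : (q = 0%N \/ (n./2 - 1 < q)%N) -> beta n q = 0%N.
Proof.
move=> hq; rewrite -card_critical_faces; apply/eqP; rewrite cards_eq0.
apply/eqP/setP => s; rewrite !inE; apply/negP => /andP[s_crit /eqP sq].
case: hq => [q0|hq]; first by move: (critical_card_neq1 s_crit); rewrite sq q0.
case/andP: s_crit => sp /forall_inP s_large.
have : (\sum_(B in s) 2 <= \sum_(B in s) #|B|)%N.
  by apply: leq_sum => B /s_large /andP[].
rewrite sum_nat_const -(card_partition sp) cardsT card_ord sq => q2n.
have : (q.+1 <= n./2)%N by rewrite -[q.+1]doubleK half_leq // -mul2n mulnC.
lia.
Qed.

Definition large s := [set x in s | (1 < #|x|)%N].

Lemma large_subset s : large s \subset s.
Proof. by apply/subsetP => x; rewrite inE => /andP[]. Qed.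

Lemma large_setU1 s v : large (v |: s) = if (1 < #|v|)%N then v |: large s else large s.
Proof.
apply/setP => x; case: ifP => h; rewrite !inE; case: (eqVneq x v) => [->|xv] //=.
by rewrite h andbF.
Qed.

Lemma large_setU1_set1 (j : 'I_n) s : large ([set j] |: s) = large s.
Proof. by rewrite large_setU1 cards1. Qed.

Lemma large_of_mem j x : j \in x -> x != [set j] -> (1 < #|x|)%N.
Proof.
move=> jx xj; have : [set j] \proper x by rewrite properEneq eq_sym xj sub1set jx.
by move/proper_card; rewrite cards1.
Qed.

(* A small block would meet one of the large blocks covering [n]. *)
Lemma critical_of_large_cover s :
  is_face s -> cover (large s) = [set: 'I_n] -> critical s.
Proof.
move=> /[dup] sf /faceP[sv sd] covT.
have s_large : s = large s.
  apply/setP => x; apply/idP/idP => [xs|]; last exact: (subsetP (large_subset _)).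
  rewrite inE xs ltnNge; apply/negP => x_small.
  have /andP[/set0Pn[i ix] _] := sv _ xs.
  have /bigcupP[y yl iy] : i \in cover (large s) by rewrite covT inE.
  have ys : y \in s by apply: (subsetP (large_subset _)).
  have xy : x != y by apply: contraTneq yl => <-; rewrite inE xs /= ltnNge x_small.
  by move/pred0P: (sd _ _ xs ys xy) => /(_ i); rewrite /= ix iy.
apply/andP; split.
  apply/and3P; split; first by rewrite s_large covT.
    by apply/trivIsetP => A B As Bs AB; apply: sd.
  by apply/negP => /sv /andP[/negP].
apply/forall_inP => x xs; have /andP[_ ->] := sv _ xs.
by move: xs; rewrite {1}s_large inE => /andP[_ ->].
Qed.

Hypothesis n_gt1 : (1 < n)%N.

Lemma vertex_set1 (j : 'I_n) : is_vertex [set j].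
Proof.
apply/andP; split; first by apply/set0Pn; exists j; rewrite inE.
apply/negP => /eqP h; move: (cardsT 'I_n); rewrite -h cards1 card_ord => h1.
by move: n_gt1; rewrite -h1.
Qed.

Lemma face_setU1_set1 t (j : 'I_n) :
  is_face t -> j \notin cover (large t) -> is_face ([set j] |: t).
Proof.
move=> ft jt; rewrite face_setU1 vertex_set1 ft /=.
apply/forall_inP => x xt; apply/implyP => xj; rewrite disjoints1.
apply: contra jt => jx; apply/bigcupP; exists x => //.
by rewrite inE xt (large_of_mem jx xj).
Qed.

Section Cone.
Variables (k : nat) (z : chain n) (P : F) (j : 'I_n).
Hypotheses (z_chain : is_chain k.+1 z) (z_cycle : bd k.+1 z = 0)
  (z_large : forall s, z s != 0 -> (#|large s| <= #|P|)%N) (jP : j \notin cover P).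
Local Notation u := [set j].

Definition cone : chain n :=
  [ffun t : F => if [&& u \in t, large t == P, is_face t & #|t| == k.+2]
                 then sgn t u * z (t :\ u) else 0].

Lemma is_chain_cone : is_chain k.+2 cone.
Proof. by move=> t; rewrite ffunE; case: ifP => [/and4P[_ _ f /eqP s]|]; rewrite ?eqxx. Qed.

Lemma cone_neq0 t : cone t != 0 -> u \in t /\ large t = P.
Proof. by rewrite ffunE; case: ifP => [/and4P[ut /eqP bt _ _]|]; rewrite ?eqxx. Qed.

Lemma large_bd_cone t : bd k.+2 cone t != 0 -> large t \subset P.
Proof.
case/bd_neq0 => v /and3P[vt _ _] /cone_neq0[_ <-]; rewrite large_setU1.
by case: ifP => // _; apply: subsetUr.
Qed.

Lemma bd_cone_notin t : large t = P -> is_face t -> #|t| = k.+1 -> u \notin t ->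
  bd k.+2 cone t = z t.
Proof.
move=> tP ft st ut; have ucof : coface k.+2 t u.
  by rewrite /coface ut cardsU1 ut st eqxx face_setU1_set1 // tP.
rewrite bdE (bigD1 u) //= big1 ?addr0.
  rewrite ffunE setU11 large_setU1_set1 tP eqxx /=.
  rewrite (_ : is_face (u |: t) && _); last by case/and3P: ucof => _ -> ->.
  by rewrite setU1K // sgn_setU1_id mulrA sgn_sqr mul1r.
move=> v /andP[_ vu]; case: (eqVneq (cone (v |: t)) 0) => [->|/cone_neq0[]].
  by rewrite mulr0.
by rewrite in_setU1 eq_sym (negbTE vu) (negbTE ut).
Qed.

Section Coface.
Variable a : F.
Hypotheses (ua : u \notin a) (aP : large a = P) (fua : is_face (u |: a)) (sa : #|a| = k).

Lemma coface_setU1_set1 v : (#|v| <= 1)%N ->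
  coface k.+2 (u |: a) v = coface k.+1 a v && (v != u).
Proof.
move=> v_small; apply/idP/idP => [/and3P[vt fa /eqP sz]|/andP[/and3P[va fa sz] vu]].
  move: vt; rewrite in_setU1 negb_or => /andP[vu va].
  rewrite /coface va vu cardsU1 va sa eqxx !andbT.
  by apply: face_subset fa _; apply/setUS/subsetUr.
have vt : v \notin u |: a by rewrite in_setU1 negb_or vu.
rewrite /coface vt cardsU1 vt cardsU1 ua sa eqxx setUCA face_setU1_set1 //.
by rewrite large_setU1 ltnNge v_small aP.
Qed.

Lemma bd_cone_term v :
  (if coface k.+2 (u |: a) v then sgn (v |: (u |: a)) v * cone (v |: (u |: a)) else 0) =
  - sgn (u |: a) u *
    (if coface k.+1 a v && (v != u) then sgn (v |: a) v * z (v |: a) else 0).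
Proof.
have Pa : P \subset a by rewrite -aP large_subset.
case: (boolP (1 < #|v|)%N) => [v_large|]; last first.
  rewrite -leqNgt => v_small; rewrite -coface_setU1_set1 //.
  case: ifP => [cof|]; last by rewrite mulr0.
  have /andP[/and3P[va _ _] vu] : coface k.+1 a v && (v != u).
    by rewrite -coface_setU1_set1.
  case/and3P: cof => vt fvt svt; have uvt : u \in v |: (u |: a).
    by rewrite !in_setU1 eqxx orbT.
  rewrite ffunE uvt large_setU1 ltnNge v_small large_setU1_set1 aP eqxx fvt svt /=.
  rewrite [X in z (X :\ _)]setUCA setU1K; last by rewrite in_setU1 negb_or eq_sym vu.
  by rewrite mulrA (sgn_setU1_pair ua va) ?mulNr ?mulrA // eq_sym.
have vP v' : v' \notin a -> v' \notin P by apply: contra; apply: (subsetP Pa).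
rewrite [LHS](_ : _ = 0); last first.
  case: ifP => // /and3P[vt _ _]; case: (eqVneq (cone (v |: (u |: a))) 0) => [->|].
    by rewrite mulr0.
  case/cone_neq0 => _; rewrite large_setU1 v_large large_setU1_set1 aP => vPP.
  by move: vt; rewrite in_setU1 negb_or => /andP[_ /vP]; rewrite -vPP setU11.
case: ifP => [/andP[/and3P[va _ _] _]|]; last by rewrite mulr0.
case: (eqVneq (z (v |: a)) 0) => [->|/z_large]; first by rewrite !mulr0.
by rewrite large_setU1 v_large aP cardsU1 (vP _ va) ltnn.
Qed.

Lemma bd_cone_setU1 : bd k.+2 cone (u |: a) = z (u |: a).
Proof.
have cyc : sgn (u |: a) u * z (u |: a) +
    \sum_(v | coface k.+1 a v && (v != u)) sgn (v |: a) v * z (v |: a) = 0.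
  have ucof : coface k.+1 a u by rewrite /coface ua fua cardsU1 ua sa eqxx.
  by move: (congr1 (fun c : chain n => c a) z_cycle); rewrite bdE ffunE (bigD1 u).
rewrite bdE big_mkcond (eq_bigr _ (fun v _ => bd_cone_term v)) -mulr_sumr -big_mkcond /=.
move/eqP: cyc; rewrite addrC addr_eq0 => /eqP ->.
by rewrite mulNr mulrN opprK mulrA sgn_sqr mul1r.
Qed.

End Coface.

Lemma bd_cone t : large t = P -> bd k.+2 cone t = z t.
Proof.
move=> tP; have [/andP[ft /eqP st]|nft] := boolP (is_face t && (#|t| == k.+1)); last first.
  have -> : z t = 0 by apply/eqP; apply: contraNT nft => /z_chain[-> ->]; rewrite eqxx.
  rewrite bdE big1 // => v /coface_face[ft st]; case/negP: nft.
  by rewrite ft st eqxx.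
have [ut|/(bd_cone_notin tP ft st) //] := boolP (u \in t).
rewrite -(setD1K ut) in tP ft st *; apply: bd_cone_setU1 => //.
- by rewrite setD11.
- by rewrite -(large_setU1_set1 j).
- by move: st; rewrite cardsU1 setD11 add1n => -[].
Qed.

End Cone.

Definition level m z := [set s | (z s != 0) && (#|large s| == m)].

Lemma cone_reduction k m z s0 :
  is_chain k.+1 z -> bd k.+1 z = 0 -> off_critical z ->
  (forall s, z s != 0 -> (#|large s| <= m)%N) -> s0 \in level m z ->
  exists d, [/\ is_chain k.+2 d, off_critical d,
    forall s, (z - bd k.+2 d) s != 0 -> (#|large s| <= m)%N &
    (#|level m (z - bd k.+2 d)%R| < #|level m z|)%N].
Proof.
move=> z_chain z_cycle z_crit z_large s0level.
move: (s0level); rewrite inE => /andP[zs0 /eqP s0m]; set P := large s0.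
have [fs0 _] := z_chain s0 zs0.
have : cover P != [set: 'I_n].
  by apply: contra zs0 => /eqP covP; rewrite z_crit // critical_of_large_cover.
rewrite -subTset => /subsetPn[j _ jP].
have zP s : z s != 0 -> (#|large s| <= #|P|)%N by rewrite s0m; apply: z_large.
have bd_d := bd_cone z_chain z_cycle zP jP.
exists (cone k z P j); split.
- exact: is_chain_cone.
- move=> t tcrit; apply/eqP; apply: contraT => /cone_neq0[jt _].
  by case/andP: tcrit => _ /forall_inP/(_ _ jt); rewrite cards1.
- move=> s; rewrite chainBE; case: (eqVneq (z s) 0) => [->|/z_large //].
  by rewrite sub0r oppr_eq0 => /large_bd_cone/subset_leq_card; rewrite s0m.
have sub : level m (z - bd k.+2 (cone k z P j)) \subset level m z :\ s0.
  apply/subsetP => t; rewrite !inE chainBE => /andP[zt /eqP tm].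
  have tP : large t != P by apply: contra zt => /eqP/bd_d ->; rewrite subrr.
  have bd0 : bd k.+2 (cone k z P j) t = 0.
    apply/eqP; apply: contraNT tP => /large_bd_cone tP.
    by rewrite eqEcard tP /= tm s0m.
  rewrite bd0 subr0 in zt; rewrite zt tm eqxx !andbT.
  by apply: contra tP => /eqP ->.
apply: leq_ltn_trans (subset_leq_card sub) _.
by rewrite [X in (_ < X)%N](cardsD1 s0) s0level.
Qed.

Lemma boundary_of_cycle k z : is_chain k.+1 z -> bd k.+1 z = 0 ->
  off_critical z ->
  exists d, [/\ is_chain k.+2 d, off_critical d & z = bd k.+2 d].
Proof.
suff reduce m z' : is_chain k.+1 z' -> bd k.+1 z' = 0 ->
    off_critical z' -> (forall s, z' s != 0 -> (#|large s| < m)%N) ->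
    exists d, [/\ is_chain k.+2 d, off_critical d & z' = bd k.+2 d].
  by move=> zc zb zt; apply: (reduce #|V|.+1) => // s _; rewrite ltnS max_card.
elim: m z' => [|m IHm] {}z z_chain z_cycle z_crit z_large.
  have -> : z = 0.
    by apply/ffunP => s; rewrite ffunE; apply/eqP; apply: contraT => /z_large.
  by exists 0; split => [t|t _|]; rewrite ?raddf0 ?ffunE ?eqxx.
have [K] := ubnP #|level m z|.
elim: K z z_chain z_cycle z_crit z_large => // K IHK z z_chain z_cycle z_crit z_large levK.
have [lev0|[s0 s0lev]] := set_0Vmem (level m z).
  apply: IHm => // s zs; rewrite ltn_neqAle -ltnS z_large // andbT.
  have : s \notin level m z by rewrite lev0 inE.
  by rewrite inE zs.
have z_le s : z s != 0 -> (#|large s| <= m)%N by move/z_large.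
have [d [d_chain d_crit d_large d_lev]] := cone_reduction z_chain z_cycle z_crit z_le s0lev.
have [d' [d'_chain d'_crit zd']] : exists d', [/\ is_chain k.+2 d',
    off_critical d' & z - bd k.+2 d = bd k.+2 d'].
  apply: IHK.
  - by apply: is_chainD => //; apply/is_chainN/is_chain_bd.
  - by rewrite raddfB /= bd_bd z_cycle subr0.
  - by move=> t /[dup] tc /andP[tp _]; rewrite chainBE z_crit // bd_partition // subr0.
  - by move=> s zs; rewrite ltnS d_large.
  - by apply: leq_trans d_lev _; rewrite -ltnS.
exists (d' + d); split.
- exact: is_chainD.
- by move=> t tc; rewrite ffunE d'_crit ?d_crit ?addr0.
- by rewrite raddfD /= -zd' subrK.
Qed.

Lemma cycle_dual_critical q s : s \in critical_faces q ->
  exists z, is_cycle q z /\ forall t, critical t -> z t = (t == s)%:Z.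
Proof.
rewrite inE => /andP[s_crit /eqP sq].
case: q sq => [s1|q sq]; first by move: (critical_card_neq1 s_crit); rewrite s1.
pose e : chain n := [ffun t => (t == s)%:Z].
have e_chain : is_chain q.+2 e.
  move=> t; rewrite ffunE; case: (eqVneq t s) => [->|] // _.
  by split; [exact: critical_face | rewrite sq].
have [d [d_chain d_crit e_d]] : exists d, [/\ is_chain q.+2 d,
    off_critical d & bd q.+2 e = bd q.+2 d].
  apply: boundary_of_cycle; [exact: is_chain_bd | exact: bd_bd |].
  by move=> t /andP[tp _]; rewrite bd_partition.
exists (e - d); split; first split.
- by apply: is_chainD => //; apply: is_chainN.
- by rewrite raddfB /= e_d subrr.
- by move=> t tc; rewrite chainBE d_crit // subr0 ffunE.
Qed.

Lemma reduced_homology_iso_beta q : reduced_homology_iso_Zpow n q (beta n q).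
Proof.
rewrite -card_critical_faces.
pose f c := [ffun i : 'I_#|critical_faces q| => c (enum_val i)].
have crit_i (i : 'I_#|critical_faces q|) : critical (enum_val i).
  by have := enum_valP i; rewrite inE => /andP[].
exists f; split; [|split].
- by move=> c1 c2 _ _; apply/ffunP => i; rewrite !ffunE.
- move=> y; have /fin_all_exists[z zP] : forall i : 'I_#|critical_faces q|,
      exists z, is_cycle q z /\ forall t, critical t -> z t = (t == enum_val i)%:Z.
    by move=> i; apply/cycle_dual_critical/enum_valP.
  exists (\sum_i z i *~ y i); split.
    apply: (big_ind (is_cycle q)) => [|c1 c2|i _]; first exact: is_cycle0.
      exact: is_cycleD.
    exact/is_cycleMz/(zP i).1.
  apply/ffunP => i; rewrite !ffunE sum_ffunE (bigD1 i) //= big1 ?addr0.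
    by rewrite ffunMzE (zP i).2 // eqxx /= intz.
  move=> i' i'i; rewrite ffunMzE (zP i').2 // (inj_eq enum_val_inj) eq_sym (negbTE i'i).
  by rewrite mul0rz.
- move=> c [c_chain c_cycle]; split => [fc0|[d [_ ->]]]; last first.
    by apply/ffunP => i; rewrite [LHS]ffunE [RHS]ffunE bd_partition //; case/andP: (crit_i i).
  have c_crit : off_critical c.
    move=> t t_crit; apply/eqP; apply: contraT => ct; have [_ ts] := c_chain t ct.
    have tq : t \in critical_faces q by rewrite inE t_crit ts eqxx.
    move/ffunP: fc0 => /(_ (enum_rank_in tq t)); rewrite !ffunE enum_rankK_in //.
    by move=> c0; rewrite c0 eqxx in ct.
  by have [d [d_chain _ ->]] := boundary_of_cycle c_chain c_cycle c_crit; exists d.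
Qed.

End Boundary.

Section Partitions.
Variable T : finType.
Implicit Types (A B D E : {set T}) (P Q : {set {set T}}).

Lemma partitionU P Q D E : partition P D -> partition Q E -> [disjoint D & E] ->
  partition (P :|: Q) (D :|: E).
Proof.
move=> /and3P[/eqP cP tP nP] /and3P[/eqP cQ tQ nQ] DE; apply/and3P; split.
- by rewrite /cover bigcup_setU -/(cover P) -/(cover Q) cP cQ.
- by rewrite trivIsetU // cP cQ.
- by rewrite inE negb_or nP nQ.
Qed.

Lemma partitionD P Q D : partition P D -> Q \subset P ->
  partition (P :\: Q) (D :\: cover Q).
Proof.
move=> /and3P[/eqP cP tP nP] QP; apply/and3P; split; last 2 first.
- exact: trivIsetD.
- by rewrite inE negb_and nP orbT.
rewrite -cP; apply/eqP/setP => x; rewrite inE.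
apply/bigcupP/andP => [[B /setDP[BP BQ] xB]|[xQ /bigcupP[B BP xB]]].
  split; last by apply/bigcupP; exists B.
  apply/bigcupP => -[C CQ xC]; have CP := subsetP QP C CQ.
  have BC : B != C by apply: contraNneq BQ => ->.
  by move/pred0P: (trivIsetP tP _ _ BP CP BC) => /(_ x); rewrite /= xB xC.
by exists B => //; rewrite inE BP andbT; apply: contra xQ => BQ; apply/bigcupP; exists B.
Qed.

(* Transport partitions along the enumeration 'I_#|D| -> D. *)
Lemma card_partitions D k :
  #|[set P | partition P D && (#|P| == k)]| = stirling2 #|D| k.
Proof.
rewrite /stirling2.
pose f := fun i : 'I_#|D| => @enum_val T (mem D) i.
have finj : injective f by apply: enum_val_inj.
have fim : f @: setT = D.
  apply/setP => x; apply/imsetP/idP => [[i _ ->]|xD]; first exact: enum_valP.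
  by exists (enum_rank_in xD x); rewrite // /f enum_rankK_in.
pose Phi := fun S : {set {set 'I_#|D|}} => [set f @: (B : {set _}) | B in S].
have Pinj : injective Phi by apply: imset_inj; apply: imset_inj.
have cPhi S : #|Phi S| = #|S| by rewrite card_imset //; apply: imset_inj.
have -> : [set P | partition P D && (#|P| == k)] =
   Phi @: [set S : {set {set 'I_#|D|}} | partition S [set: 'I_#|D|] && (#|S| == k)].
  apply/setP => R; rewrite inE; apply/idP/imsetP => [/andP[Rp /eqP Rk]|[S]].
    pose S := [set f @^-1: (B : {set _}) | B in R].
    have fpre C : C \in R -> f @: (f @^-1: C) = C.
      move=> CR; apply/setP => x; apply/imsetP/idP => [[y]|xC]; first by rewrite inE => ? ->.
      have xD : x \in D by rewrite -(cover_partition Rp); apply/bigcupP; exists C.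
      have /imsetP[y _ xy] : x \in f @: setT by rewrite fim.
      by exists y => //; rewrite inE -xy.
    have PS : Phi S = R.
      rewrite /Phi /S -imset_comp; apply/setP => B; apply/imsetP/idP => [[C CR ->]|BR].
        by rewrite /= fpre.
      by exists B => //=; rewrite fpre.
    exists S => //; rewrite inE -cPhi PS Rk eqxx andbT.
    by rewrite -(imset_partition _ _ finj) fim -/(Phi S) PS.
  rewrite inE => /andP[Sp /eqP Sk] ->; rewrite cPhi Sk eqxx andbT.
  by rewrite -fim /Phi imset_partition.
by rewrite card_imset.
Qed.

Lemma sum_subsets_card (R : nmodType) B (g : nat -> R) :
  \sum_(A : {set T} | A \subset B) g #|A| = \sum_(i < #|B|.+1) g i *+ 'C(#|B|, i).
Proof.
rewrite (partition_big (fun A : {set T} => inord #|A| : 'I_#|B|.+1) xpredT) //=.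
apply: eq_bigr => i _.
rewrite (eq_bigl (fun A : {set T} => (A \subset B) && (#|A| == i))); last first.
  move=> A; case: (boolP (A \subset B)) => //= AB.
  by rewrite -val_eqE /= inordK // ltnS subset_leq_card.
rewrite (eq_bigr (fun _ => g i)); last by move=> A /andP[_ /eqP ->].
rewrite sumr_const -(cards_draws B i); congr (_ *+ _); apply: eq_card => A.
by rewrite inE.
Qed.

Lemma sum_subsets_sign B :
  \sum_(A : {set T} | A \subset B) (-1) ^+ #|A| = (B == set0)%:R :> int.
Proof.
rewrite (sum_subsets_card B (fun i => (-1) ^+ i)).
transitivity ((1 + (-1)) ^+ #|B| : int); last by rewrite addrN expr0n cards_eq0.
by rewrite exprDn; apply: eq_bigr => i _; rewrite expr1n mul1r.
Qed.

Definition set1s A := [set [set a] | a in A].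

Lemma card_set1s A : #|set1s A| = #|A|.
Proof. by rewrite card_imset //; apply: set1_inj. Qed.

Lemma partition_set1s A : partition (set1s A) A.
Proof.
apply/and3P; split.
- rewrite /set1s cover_imset; apply/eqP/setP => x.
  apply/bigcupP/idP => [[a aA]|xA]; first by rewrite inE => /eqP ->.
  by exists x; rewrite ?inE.
- apply/trivIsetP => _ _ /imsetP[a _ ->] /imsetP[b _ ->] ab.
  by rewrite disjoints1 inE; apply: contra ab => /eqP ->.
- by apply/imsetP => -[a _ /esym/eqP]; rewrite -subset0 sub1set inE.
Qed.

Definition singletons P := [set x | [set x] \in P].

Lemma subset_singletons A P : (A \subset singletons P) = (set1s A \subset P).
Proof.
apply/subsetP/subsetP => AP x; last by move=> xA; rewrite inE AP ?imset_f.
by case/imsetP => a /AP; rewrite inE => aP ->.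
Qed.

Lemma card_partitions_set1s A k :
  #|[set P | [&& partition P [set: T], #|P| == k & set1s A \subset P]]| =
  if (#|A| <= k)%N then stirling2 (#|T| - #|A|) (k - #|A|) else 0%N.
Proof.
set S := set1s A; have Sp : partition S A := partition_set1s A.
case: ifP => Ak; last first.
  apply/eqP; rewrite cards_eq0; apply/eqP/setP => P; rewrite !inE.
  apply/negP => /and3P[_ /eqP Pk /subset_leq_card].
  by rewrite card_set1s Pk Ak.
rewrite -(cardsC A) addKn -card_partitions.
have QS Q : partition Q (~: A) -> [disjoint Q & S].
  move=> Qp; apply/pred0P => B /=; apply/negP => /andP[BQ /imsetP[a aA Ba]].
  by have := subsetP (partitionS Qp BQ) a; rewrite Ba set11 inE aA => /(_ isT).
rewrite -[RHS](@card_in_imset _ _ (fun Q => Q :|: S)); last first.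
  move=> Q1 Q2; rewrite !inE => /andP[Q1p _] /andP[Q2p _] /(congr1 (fun X => X :\: S)).
  by rewrite !setDUl setDv !setU0 (setDidPl (QS _ Q1p)) (setDidPl (QS _ Q2p)).
apply: eq_card => P; rewrite inE; apply/and3P/imsetP => [[Pp /eqP Pk SP]|[Q]].
  exists (P :\: S).
    rewrite inE cardsDS // Pk card_set1s eqxx andbT -setTD -(cover_partition Sp).
    exact: partitionD.
  by rewrite setUC -{1}(setIidPr SP) setID.
rewrite inE => /andP[Qp /eqP Qk] ->; split.
- rewrite -(setUCr A) [A :|: _]setUC; apply: partitionU => //.
  by rewrite disjoint_sym disjoints_subset setCK.
- rewrite cardsU (_ : Q :&: S = set0) ?cards0 ?subn0 ?Qk ?card_set1s ?subnK //.
  by apply/eqP; rewrite setI_eq0 QS.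
- exact: subsetUr.
Qed.

End Partitions.

Lemma beta_no_singletons n q : (0 < q)%N -> beta n q =
  #|[set P : {set {set 'I_n}} |
     [&& partition P [set: 'I_n], #|P| == q.+1 & singletons P == set0]]|.
Proof.
move=> q_gt0; apply: eq_card => P; rewrite !inE.
case Pp: (partition P _) => //=; case: (eqVneq #|P| q.+1) => //= Pk.
apply/forall_inP/eqP => [P_large|P1].
  apply/setP => i; rewrite !inE; apply/negP => /P_large.
  by rewrite cards1.
move=> B BP; apply/andP; split.
  rewrite ltnNge; apply/negP => B_small.
  have /cards1P[i Bi] : #|B| == 1%N.
    by rewrite eqn_leq B_small card_gt0 (partition_neq0 Pp BP).
  by have := in_set0 i; rewrite -P1 inE -Bi BP.
apply/negP => /eqP BT; have : P \subset [set B].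
  apply/subsetP => C CP; rewrite inE; apply/contraT => CB.
  have := trivIsetP (partition_trivIset Pp) _ _ CP BP CB.
  by rewrite BT disjoints_subset setCT subset0 (negbTE (partition_neq0 Pp CP)).
by move/subset_leq_card; rewrite cards1 Pk; lia.
Qed.

Lemma beta_inclusion_exclusion n q : (0 < q)%N -> (q <= n - 1)%N ->
  (beta n q)%:Z = \sum_(0 <= i < q.+2)
        (-1) ^+ i * ('C(n, i))%:Z * (stirling2 (n - i) (q.+1 - i))%:Z.
Proof.
move=> q_gt0 qn; rewrite beta_no_singletons //; set k := q.+1.
pose pk P := partition P [set: 'I_n] && (#|P| == k).
pose h i := if (i <= k)%N then stirling2 (n - i) (k - i) else 0%N.
have -> : #|[set P | [&& partition P [set: 'I_n], #|P| == k & singletons P == set0]]|%:Z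
    = \sum_(P | pk P) \sum_(A : {set 'I_n} | A \subset singletons P) (-1) ^+ #|A|.
  rewrite -sum1_card -natz natr_sum big_mkcond [RHS]big_mkcond; apply: eq_bigr => P _.
  rewrite sum_subsets_sign in_set /pk /partition.
  by case: (cover P == _); case: (trivIset P && _); case: (#|P| == k); case: (_ == set0).
rewrite (exchange_big_dep xpredT) //=.
rewrite (eq_bigr (fun A : {set 'I_n} => (-1) ^+ #|A| *+ h #|A|)); last first.
  move=> A _; rewrite sumr_const; congr (_ *+ _).
  have := card_partitions_set1s A k; rewrite card_ord -/(h #|A|) => <-.
  by apply: eq_card => P; rewrite unfold_in in_set /pk subset_singletons andbA.
rewrite (eq_bigl (fun A : {set 'I_n} => A \subset [set: 'I_n])) => [|A]; last first.
  by rewrite subsetT.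
rewrite (sum_subsets_card [set: 'I_n] (fun i => (-1) ^+ i *+ h i)) cardsT card_ord.
rewrite -(big_mkord xpredT (fun i => (-1) ^+ i *+ h i *+ 'C(n, i))).
rewrite (@big_cat_nat _ _ _ k.+1) //=; last by lia.
rewrite [X in _ + X]big1_seq ?addr0 => [|i /andP[_]]; last first.
  by rewrite mem_index_iota /h => /andP[/ltn_geF -> _]; rewrite mul0rn.
apply: eq_big_nat => i /andP[_ ik].
by rewrite /h -ltnS ik -mulrnA -mulr_natr natz PoszM mulrA mulrAC.
Qed.

Theorem theorem1 (n q : nat) (hn : (2 <= n)%N) (hq : (q <= n - 1)%N) :
  reduced_homology_iso_Zpow n q (beta n q) /\
  ((q = 0%N \/ (n./2 - 1 < q)%N) -> reduced_homology_iso_Zpow n q 0) /\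
  ((0 < q)%N ->
     (beta n q)%:Z = \sum_(0 <= i < q.+2)
        (-1) ^+ i * ('C(n, i))%:Z * (stirling2 (n - i) (q.+1 - i))%:Z).
Proof.
split; first exact: reduced_homology_iso_beta.
split; last by move=> q_gt0; apply: beta_inclusion_exclusion.
by move=> q_small; rewrite -(beta_eq0 q_small); apply: reduced_homology_iso_beta.
Qed.
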